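(* Consider the two systems of ODEs for scalar functions $p(z),q(z)$: \[ \text{(I)}\quad p'''= 6pp'+3q'+zp'+2p,\qquad q'''= 12pq'+6p'p''+3p''+4zq'-2q, \] \[ \text{(II)}\quad p'''= 3pp'+3q'+zp'+2p,\qquad q'''= 12pq'+6p'q+3p''+4zq'-2q. \] Each of the systems (I) and (II) possesses formal Laurent series solutions of the form \[ p=\sum_{i=-2}^{\infty}\alpha_i(z-a)^i,\qquad q=\sum_{i=-4}^{\infty}\beta_i(z-a)^i \] depending on six arbitrary parameters.
   Context: Primes denote derivatives with respect to $z$. The parameter count includes the pole position $a$. *)

(* Formal Laurent series in (z - a) with coefficients in a
   numeric algebraically closed field C (e.g. the complex numbers), represented
   by their coefficient sequence  f : int -> C,  f i = coefficient of (z-a)^i. *)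
From HB Require Import structures.
From mathcomp Require Import all_boot all_order all_algebra.
Set Implicit Arguments. Unset Strict Implicit. Unset Printing Implicit Defensive.
Import Order.TTheory GRing.Theory Num.Theory.
Local Open Scope ring_scope.

Section Laurent.
Variable C : numClosedFieldType.

Definition supp_ge (N : int) (f : int -> C) : Prop := forall i : int, i < N -> f i = 0.

Definition lder (f : int -> C) : int -> C := fun n => (n + 1)%:~R * f (n + 1).

(* multiplication by z = a + (z - a) *)
Definition zmul (a : C) (f : int -> C) : int -> C := fun n => a * f n + f (n - 1).

(* Cauchy product of two Laurent series both supported on indices >= -7
   (all products appearing below are of this kind). *)
Definition lmul (f g : int -> C) : int -> C :=
  fun n => \sum_(i < (14 + absz n).+1) f (i%:Z - 7) * g (n - (i%:Z - 7)).

Definition systemI (a : C) (p q : int -> C) : Prop :=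
  forall n : int,
    lder (lder (lder p)) n =
      6 * lmul p (lder p) n + 3 * lder q n + zmul a (lder p) n + 2 * p n
  /\ lder (lder (lder q)) n =
      12 * lmul p (lder q) n + 6 * lmul (lder p) (lder (lder p)) n
      + 3 * lder (lder p) n + 4 * zmul a (lder q) n - 2 * q n.

Definition systemII (a : C) (p q : int -> C) : Prop :=
  forall n : int,
    lder (lder (lder p)) n =
      3 * lmul p (lder p) n + 3 * lder q n + zmul a (lder p) n + 2 * p n
  /\ lder (lder (lder q)) n =
      12 * lmul p (lder q) n + 6 * lmul (lder p) q n
      + 3 * lder (lder p) n + 4 * zmul a (lder q) n - 2 * q n.

Definition coef_at (p q : int -> C) (pos : bool * int) : C :=
  if pos.1 then q pos.2 else p pos.2.

(* "sys possesses formal Laurent series solutions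
     p = sum_{i>=-2} alpha_i (z-a)^i,  q = sum_{i>=-4} beta_i (z-a)^i
   (with genuine leading terms alpha_{-2} <> 0, beta_{-4} <> 0)
   depending on six arbitrary parameters":  the pole position a is arbitrary,
   and there are five coefficient positions whose values can be prescribed
   arbitrarily. *)
Definition six_parameter_laurent_family (sys : C -> (int -> C) -> (int -> C) -> Prop) : Prop :=
  exists pos : 'I_5 -> bool * int,
    forall (a : C) (c : 'I_5 -> C),
      exists p q : int -> C,
        [/\ supp_ge (-2) p /\ supp_ge (-4) q, p (-2) != 0, q (-4) != 0,
            sys a p q & (forall k : 'I_5, coef_at p q (pos k) = c k)].

End Laurent.

From HB Require Import structures.
From mathcomp Require Import all_boot all_order all_algebra.
From mathcomp Require Import zify ring.
From Stdlib Require Import FunctionalExtensionality.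
Set Implicit Arguments. Unset Strict Implicit. Unset Printing Implicit Defensive.
Import Order.TTheory GRing.Theory Num.Theory.
Local Open Scope ring_scope.

(* Write p = sum_k u_k (z-a)^(k-2) and q = sum_k v_k (z-a)^(k-4).  Comparing
   coefficients, order 0 is the leading balance, solved by (u_0, v_0) = (1, 1) for
   (I) and (2, 2) for (II); at every order m > 0 the pair (u_m, v_m) solves a 2x2
   linear system whose matrix depends only on m and (u_0, v_0) and whose right-hand
   side depends only on lower coefficients.  The determinant of this matrix vanishes
   at the resonances m = 3, 4, 4, 6, 8 for (I) and m = 2, 3, 4, 6, 10 for (II); its
   remaining root m = -1 corresponds to moving the pole a.  At each resonance the
   compatibility condition of the degenerate system holds identically in a and in
   the coefficients chosen before, as an explicit computation of the coefficients up
   to the last resonance shows.  Hence each resonance frees one coefficient (the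
   double one two), five in all, and a is the sixth parameter. *)

Section ShiftedSeries.
Variable C : numClosedFieldType.
Implicit Types (F G : nat -> C) (A B : nat).

Definition ext0 F (x : int) : C := if x is Posz k then F k else 0.

Definition shifted A F : int -> C := fun i => ext0 F (i + A%:Z).

Definition dcoef A F : nat -> C := fun k => (k%:R - A%:R) * F k.

Definition cauchy F G : nat -> C := fun m => \sum_(s < m.+1) F s * G (m - s)%N.

Lemma ext0_nat F x k : x = k%:Z -> ext0 F x = F k.
Proof. by move->. Qed.

Lemma ext0_neg F x : x < 0 -> ext0 F x = 0.
Proof. by case: x. Qed.

Lemma eq_ext0_lt F G M x :
  (forall j, (j < M)%N -> F j = G j) -> x < M%:Z -> ext0 F x = ext0 G x.
Proof. by case: x => //= k FG; rewrite ltz_nat; apply: FG. Qed.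

Lemma ext0_eq0 F x : F =1 (fun=> 0) -> ext0 F x = 0.
Proof. by case: x => //= k; apply. Qed.

Lemma lder_shifted A F : lder (shifted A F) = shifted A.+1 (dcoef A F).
Proof.
apply: functional_extensionality => i; rewrite /lder /shifted /dcoef.
have -> : i + 1 + A%:Z = i + A.+1%:Z by lia.
case Hx: (i + A.+1%:Z) => [k|k] /=; last by rewrite mulr0.
have -> : i + 1 = k%:Z - A%:Z by lia.
by rewrite intrB.
Qed.

Lemma lmul_shifted A B F G n : (A <= 7)%N -> (B <= 7)%N ->
  lmul (shifted A F) (shifted B G) n = shifted (A + B) (cauchy F G) n.
Proof.
move=> A7 B7; rewrite /lmul /shifted /cauchy.
case HN: (n + (A + B)%N%:Z) => [N|N] /=; last first.
  apply: big1 => i _; case: (ltnP i (7 - A)) => Hi.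
    by rewrite ext0_neg ?mul0r //; lia.
  by rewrite [ext0 G _]ext0_neg ?mulr0 //; lia.
(* Only the terms with 7 - A <= i <= 7 - A + N survive; shift them down by 7 - A. *)
rewrite -(big_mkord xpredT
  (fun i => ext0 F (i%:Z - 7 + A%:Z) * ext0 G (n - (i%:Z - 7) + B%:Z))).
rewrite (big_cat_nat _ (n := (7 - A)%N)) //=; last by lia.
rewrite [X in _ + X](big_cat_nat _ (n := (7 - A + N.+1)%N)) //=; try lia.
rewrite big1_seq ?add0r; last first.
  move=> i /andP[_]; rewrite mem_index_iota => /andP[_ Hi].
  by rewrite ext0_neg ?mul0r //; lia.
rewrite [X in _ + X]big1_seq ?addr0; last first.
  move=> i /andP[_]; rewrite mem_index_iota => /andP[Hi _].
  by rewrite [ext0 G _]ext0_neg ?mulr0 //; lia.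
rewrite -{1}[(7 - A)%N]add0n big_addn.
have -> : (7 - A + N.+1 - (7 - A) = N.+1)%N by lia.
rewrite big_mkord; apply: eq_bigr => i _.
have iN := ltn_ord i.
by rewrite (ext0_nat F (k := i)) ?(ext0_nat G (k := (N - i)%N)) //; lia.
Qed.

Lemma cauchy_split F G m : (0 < m)%N ->
  cauchy F G m = F 0%N * G m + \sum_(1 <= s < m) F s * G (m - s)%N + F m * G 0%N.
Proof.
move=> m_gt0; rewrite /cauchy -(big_mkord xpredT (fun s => F s * G (m - s)%N)).
by rewrite big_nat_recr //= big_ltn // subn0 subnn.
Qed.

End ShiftedSeries.

Section StrongRecursion.
Variables (T : Type) (x0 : T) (step : nat -> (nat -> T) -> T).
Hypothesis step_ext :
  forall m f g, (forall j, (j < m)%N -> f j = g j) -> step m f = step m g.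

Fixpoint strong_rec_upto k : nat -> T :=
  if k is k'.+1 then
    fun i => if i == k' then step k' (strong_rec_upto k') else strong_rec_upto k' i
  else fun=> x0.

Definition strong_rec m := step m (strong_rec_upto m).

Lemma strong_rec_uptoE k i : (i < k)%N -> strong_rec_upto k i = strong_rec i.
Proof.
elim: k i => // k IHk i /=; rewrite ltnS leq_eqVlt.
by case: eqP => [-> //| _] /= /IHk.
Qed.

Lemma strong_recE m : strong_rec m = step m strong_rec.
Proof. exact/step_ext/strong_rec_uptoE. Qed.

End StrongRecursion.

Section Residuals.
Variables (C : numClosedFieldType) (a : C) (w : nat -> C * C).

Definition pcoef k := (w k).1.
Definition qcoef k := (w k).2.

Local Notation u := pcoef.
Local Notation v := qcoef.
Local Notation u1 := (dcoef 2 u).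
Local Notation u2 := (dcoef 3 u1).
Local Notation u3 := (dcoef 4 u2).
Local Notation v1 := (dcoef 4 v).
Local Notation v2 := (dcoef 5 v1).
Local Notation v3 := (dcoef 6 v2).

Definition resP (c : C) m :=
  u3 m - c * cauchy u u1 m - 3 * v1 m
  - a * ext0 u1 (m%:Z - 2) - ext0 u1 (m%:Z - 3) - 2 * ext0 u (m%:Z - 3).

Definition resQ (sysI : bool) m :=
  v3 m - 12 * cauchy u v1 m - 6 * (if sysI then cauchy u1 u2 m else cauchy u1 v m)
  - 3 * ext0 u2 (m%:Z - 3) - 4 * (a * ext0 v1 (m%:Z - 2) + ext0 v1 (m%:Z - 3))
  + 2 * ext0 v (m%:Z - 3).

Let p := shifted 2 u.
Let q := shifted 4 v.

Lemma shifted_resP c n :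
  lder (lder (lder p)) n -
    (c * lmul p (lder p) n + 3 * lder q n + zmul a (lder p) n + 2 * p n)
  = shifted 5 (resP c) n.
Proof.
rewrite /p /q !lder_shifted lmul_shifted // /zmul /shifted /resP.
rewrite -[(2 + 3)%N]/5%N.
case Hm: (n + 5%:Z) => [m|m] /=.
  have -> : n + 3%:Z = m%:Z - 2 by lia.
  have -> : n - 1 + 3%:Z = m%:Z - 3 by lia.
  have -> : n + 2%:Z = m%:Z - 3 by lia.
  ring.
by rewrite ![ext0 _ (n + _)]ext0_neg ?[ext0 _ (n - 1 + _)]ext0_neg; try lia; ring.
Qed.

Lemma shifted_resQ (sysI : bool) n :
  lder (lder (lder q)) n -
    (12 * lmul p (lder q) n
     + 6 * (if sysI then lmul (lder p) (lder (lder p)) n else lmul (lder p) q n)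
     + 3 * lder (lder p) n + 4 * zmul a (lder q) n - 2 * q n)
  = shifted 7 (resQ sysI) n.
Proof.
rewrite /p /q !lder_shifted !lmul_shifted // -[(3 + 4)%N]/7%N -[(2 + 5)%N]/7%N.
rewrite /zmul /shifted /resQ.
case Hm: (n + 7%:Z) => [m|m] /=.
  have -> : n + 4%:Z = m%:Z - 3 by lia.
  have -> : n + 5%:Z = m%:Z - 2 by lia.
  have -> : n - 1 + 5%:Z = m%:Z - 3 by lia.
  by case: sysI; ring.
rewrite ![ext0 _ (n + _)]ext0_neg ?[ext0 _ (n - 1 + _)]ext0_neg; try lia.
by case: sysI; ring.
Qed.

Lemma systemI_of_residuals :
  (forall m, resP 6 m = 0 /\ resQ true m = 0) -> systemI a p q.
Proof.
move=> res0 n; split; apply/eqP; rewrite -subr_eq0; apply/eqP.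
  by rewrite shifted_resP; apply/ext0_eq0 => m; case: (res0 m).
by rewrite (shifted_resQ true); apply/ext0_eq0 => m; case: (res0 m).
Qed.

Lemma systemII_of_residuals :
  (forall m, resP 3 m = 0 /\ resQ false m = 0) -> systemII a p q.
Proof.
move=> res0 n; split; apply/eqP; rewrite -subr_eq0; apply/eqP.
  by rewrite shifted_resP; apply/ext0_eq0 => m; case: (res0 m).
by rewrite (shifted_resQ false); apply/ext0_eq0 => m; case: (res0 m).
Qed.

End Residuals.

Section Levels.
Variables (C : numClosedFieldType) (a : C).
Implicit Types (w : nat -> C * C) (m : nat).

Definition lin11 (c u0 x : C) :=
  (x - 4) * (x - 3) * (x - 2) - c * u0 * (x - 2) + 2 * c * u0.
Definition lin12 (x : C) := - 3 * (x - 4).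
Definition lin21 (sysI : bool) (u0 v0 x : C) :=
  if sysI then 48 * v0 + 12 * u0 * (x - 3) * (x - 2) - 36 * u0 * (x - 2)
  else 48 * v0 - 6 * v0 * (x - 2).
Definition lin22 (sysI : bool) (u0 x : C) :=
  (x - 6) * (x - 5) * (x - 4) - 12 * u0 * (x - 4) + (if sysI then 0 else 12 * u0).

Definition rhsP w (c : C) m :=
  let u := pcoef w in
  c * \sum_(1 <= s < m) u s * dcoef 2 u (m - s)%N
  + a * ext0 (dcoef 2 u) (m%:Z - 2) + ext0 (dcoef 2 u) (m%:Z - 3) + 2 * ext0 u (m%:Z - 3).

Definition rhsQ w (sysI : bool) m :=
  let u := pcoef w in let v := qcoef w in
  12 * \sum_(1 <= s < m) u s * dcoef 4 v (m - s)%N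
  + 6 * (if sysI then \sum_(1 <= s < m) dcoef 2 u s * dcoef 3 (dcoef 2 u) (m - s)%N
         else \sum_(1 <= s < m) dcoef 2 u s * v (m - s)%N)
  + 3 * ext0 (dcoef 3 (dcoef 2 u)) (m%:Z - 3)
  + 4 * (a * ext0 (dcoef 4 v) (m%:Z - 2) + ext0 (dcoef 4 v) (m%:Z - 3))
  - 2 * ext0 v (m%:Z - 3).

Lemma resP_level w c m : (0 < m)%N ->
  resP a w c m =
  lin11 c (pcoef w 0) m%:R * pcoef w m + lin12 m%:R * qcoef w m - rhsP w c m.
Proof.
move=> m_gt0; rewrite /resP /rhsP cauchy_split // /lin11 /lin12 /dcoef; ring.
Qed.

Lemma resQ_level w sysI m : (0 < m)%N ->
  resQ a w sysI m =
  lin21 sysI (pcoef w 0) (qcoef w 0) m%:R * pcoef w m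
  + lin22 sysI (pcoef w 0) m%:R * qcoef w m - rhsQ w sysI m.
Proof.
move=> m_gt0; rewrite /resQ /rhsQ !cauchy_split // /lin21 /lin22 /dcoef.
by case: sysI; ring.
Qed.

Lemma resP_lead w c :
  resP a w c 0 = 2 * c * pcoef w 0 ^+ 2 - 24 * pcoef w 0 + 12 * qcoef w 0.
Proof. by rewrite /resP /cauchy big_ord1 subnn /dcoef /=; ring. Qed.

Lemma resQ_lead w (sysI : bool) :
  resQ a w sysI 0 =
  (if sysI then 72 * pcoef w 0 ^+ 2 + 48 * pcoef w 0 * qcoef w 0
   else 60 * pcoef w 0 * qcoef w 0) - 120 * qcoef w 0.
Proof. by rewrite /resQ /cauchy !big_ord1 subnn /dcoef /=; case: sysI; ring. Qed.

Section LowerLevels.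
Variables (w w' : nat -> C * C) (m : nat).
Hypothesis ww' : forall j, (j < m)%N -> w j = w' j.

Let ww'_sub s : (1 <= s < m)%N -> w s = w' s /\ w (m - s)%N = w' (m - s)%N.
Proof. by move=> s_range; rewrite !ww' //; lia. Qed.

Lemma eq_rhsP c : rhsP w c m = rhsP w' c m.
Proof.
rewrite /rhsP /pcoef /dcoef; congr (_ * _ + _ * _ + _ + _ * _).
- by apply: eq_big_nat => s /ww'_sub[-> ->].
- by apply: (eq_ext0_lt (M := m)) => [j /ww' ->|]; last lia.
- by apply: (eq_ext0_lt (M := m)) => [j /ww' ->|]; last lia.
- by apply: (eq_ext0_lt (M := m)) => [j /ww' ->|]; last lia.
Qed.

Lemma eq_rhsQ sysI : rhsQ w sysI m = rhsQ w' sysI m.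
Proof.
rewrite /rhsQ /pcoef /qcoef /dcoef; congr (12 * _ + 6 * _ + 3 * _ + 4 * (_ * _ + _) - 2 * _).
- by apply: eq_big_nat => s /ww'_sub[-> ->].
- by case: sysI; apply: eq_big_nat => s /ww'_sub[-> ->].
- by apply: (eq_ext0_lt (M := m)) => [j /ww' ->|]; last lia.
- by apply: (eq_ext0_lt (M := m)) => [j /ww' ->|]; last lia.
- by apply: (eq_ext0_lt (M := m)) => [j /ww' ->|]; last lia.
- by apply: (eq_ext0_lt (M := m)) => [j /ww' ->|]; last lia.
Qed.

End LowerLevels.
End Levels.

Definition cramer (C : fieldType) (x11 x12 x21 x22 r1 r2 : C) : C * C :=
  let d := x11 * x22 - x12 * x21 in ((x22 * r1 - x12 * r2) / d, (x11 * r2 - x21 * r1) / d).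

Lemma cramerP (C : fieldType) (x11 x12 x21 x22 r1 r2 : C) :
  x11 * x22 - x12 * x21 != 0 ->
  let y := cramer x11 x12 x21 x22 r1 r2 in
  x11 * y.1 + x12 * y.2 - r1 = 0 /\ x21 * y.1 + x22 * y.2 - r2 = 0.
Proof. by move=> d_neq0; rewrite /cramer /=; split; field. Qed.

Lemma six_parameter_laurent_family_of (C : numClosedFieldType)
    (sys : C -> (int -> C) -> (int -> C) -> Prop) (pos : seq (bool * int)) :
  (forall a t1 t2 t3 t4 t5, exists p q : int -> C,
     [/\ supp_ge (-2) p /\ supp_ge (-4) q, p (-2) != 0, q (-4) != 0, sys a p q &
         map (coef_at p q) pos = [:: t1; t2; t3; t4; t5]]) ->
  six_parameter_laurent_family sys.
Proof.
move=> fam; exists (fun k => nth (false, 0) pos k) => a c.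
have [p [q [supp p_lead q_lead sol coefs]]] :=
  fam a (c ord0) (c (inord 1)) (c (inord 2)) (c (inord 3)) (c (inord 4)).
exists p, q; split => // k.
have size_pos : size pos = 5%N by rewrite -(size_map (coef_at p q)) coefs.
rewrite -(nth_map _ 0) ?size_pos // coefs.
by case: k => [[|[|[|[|[|//]]]]] ?]; congr c; apply: val_inj; rewrite /= ?inordK.
Qed.

Ltac expand_level :=
  rewrite /rhsP /rhsQ /index_iota /= ?big_cons ?big_nil ?subnE ?addnE /= /pcoef /qcoef /dcoef.

Ltac solve_level := rewrite /lin11 /lin12 /lin21 /lin22 /=; split; field.

Section SystemI.
Variables (C : numClosedFieldType) (a t1 t2 t3 t4 t5 : C).

(* At a simple resonance the free coefficient is prescribed and the other one is
   read off from a nondegenerate row; the remaining row is the compatibility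
   condition (rhsI3, compatI6, compatI8).  At m = 4 the matrix vanishes and both
   are prescribed (rhsI4). *)
Definition solveI m (rp rq : C) : C * C :=
  let x := m%:R in
  if m == 3%N then ((rp - 3 * t1) / 6, t1)
  else if m == 4%N then (t2, t3)
  else if m == 6%N then ((rp + 6 * t4) / 12, t4)
  else if m == 8%N then ((rp + 12 * t5) / 96, t5)
  else cramer (lin11 6 1 x) (lin12 x) (lin21 true 1 1 x) (lin22 true 1 x) rp rq.

Definition stepI m (w : nat -> C * C) : C * C :=
  if m is 0 then (1, 1) else solveI m (rhsP a w 6 m) (rhsQ a w true m).

Definition coefsI := strong_rec (0, 0) stepI.

Lemma coefsIE m : coefsI m = stepI m coefsI.
Proof.
apply: strong_recE => {}m w w' ww'; case: m ww' => //= m ww'.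
by rewrite (eq_rhsP _ ww') (eq_rhsQ _ ww').
Qed.

Ltac coefI_tac :=
  rewrite coefsIE /= /solveI /= /cramer /lin11 /lin12 /lin21 /lin22; expand_level.

Lemma coefsI0 : coefsI 0 = (1, 1).
Proof. by rewrite coefsIE. Qed.
Lemma coefsI1 : coefsI 1 = (0, 0).
Proof. by coefI_tac; rewrite ?coefsI0 /=; congr pair; field. Qed.
Lemma coefsI2 : coefsI 2 = ((-1 / 3) * a, (1 / 3) * a).
Proof. by coefI_tac; rewrite ?coefsI0 ?coefsI1 /=; congr pair; field. Qed.
Lemma rhsI3 : rhsP a coefsI 6 3 = 0 /\ rhsQ a coefsI true 3 = 0.
Proof. by expand_level; rewrite ?coefsI0 ?coefsI1 ?coefsI2 /=; split; field. Qed.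
Lemma coefsI3 : coefsI 3 = ((-1 / 2) * t1, t1).
Proof. by rewrite coefsIE /= /solveI /= rhsI3.1; congr pair; field. Qed.
Lemma rhsI4 : rhsP a coefsI 6 4 = 0 /\ rhsQ a coefsI true 4 = 0.
Proof.
by expand_level; rewrite ?coefsI0 ?coefsI1 ?coefsI2 ?coefsI3 /=; split; field.
Qed.
Lemma coefsI4 : coefsI 4 = (t2, t3).
Proof. by rewrite coefsIE. Qed.
Lemma coefsI5 : coefsI 5 =
  ((-1 / 18) * a + (1 / 6) * a * t1, (2 / 9) * a + (-1 / 6) * a * t1).
Proof.
by coefI_tac; rewrite ?coefsI0 ?coefsI1 ?coefsI2 ?coefsI3 ?coefsI4 /=; congr pair; field.
Qed.
Lemma rhsPI6 : rhsP a coefsI 6 6 = (-3 / 2) * t1 + (3 / 2) * t1 ^+ 2 + (-2) * a * t2.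
Proof.
by expand_level; rewrite ?coefsI0 ?coefsI1 ?coefsI2 ?coefsI3 ?coefsI4 ?coefsI5 /=; field.
Qed.
Lemma compatI6 : rhsQ a coefsI true 6 = 4 * rhsP a coefsI 6 6.
Proof.
by expand_level; rewrite ?coefsI0 ?coefsI1 ?coefsI2 ?coefsI3 ?coefsI4 ?coefsI5 /=; field.
Qed.
Lemma coefsI6 : coefsI 6 =
  ((1 / 2) * t4 + (-1 / 8) * t1 + (1 / 8) * t1 ^+ 2 + (-1 / 6) * a * t2, t4).
Proof. by rewrite coefsIE /= /solveI /= rhsPI6; congr pair; field. Qed.
Lemma coefsI7 : coefsI 7 =
  ((1 / 16) * t3 + (11 / 48) * t2 + (-3 / 8) * t1 * t2 + (1 / 288) * a ^+ 2
     + (-1 / 96) * a ^+ 2 * t1,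
   (7 / 24) * t3 + (5 / 8) * t2 + (-3 / 4) * t1 * t2 + (-1 / 432) * a ^+ 2
     + (1 / 144) * a ^+ 2 * t1).
Proof.
coefI_tac; rewrite ?coefsI0 ?coefsI1 ?coefsI2 ?coefsI3 ?coefsI4 ?coefsI5 ?coefsI6 /=.
by congr pair; field.
Qed.
Lemma compatI8 : rhsQ a coefsI true 8 = 2 * rhsP a coefsI 6 8.
Proof.
expand_level; rewrite ?coefsI0 ?coefsI1 ?coefsI2 ?coefsI3 ?coefsI4 ?coefsI5 ?coefsI6 ?coefsI7 /=.
by field.
Qed.

Definition detI (x : C) := (x - 4) ^+ 2 * (x + 1) * (x - 3) * (x - 6) * (x - 8).

Lemma detIE x : lin11 6 1 x * lin22 true 1 x - lin12 x * lin21 true 1 1 x = detI x.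
Proof. by rewrite /lin11 /lin12 /lin21 /lin22 /detI; ring. Qed.

Lemma detI_neq0 m : (m != 3)%N -> (m != 4)%N -> (m != 6)%N -> (m != 8)%N ->
  detI m%:R != 0.
Proof.
move=> m3 m4 m6 m8; rewrite /detI.
by rewrite !mulf_neq0 ?expf_neq0 // ?natr1 ?pnatr_eq0 // subr_eq0 eqr_nat.
Qed.

Lemma residualsI m : resP a coefsI 6 m = 0 /\ resQ a coefsI true m = 0.
Proof.
case: m => [|m]; first by rewrite resP_lead resQ_lead /pcoef /qcoef coefsI0 /=; split; ring.
rewrite resP_level // resQ_level // /pcoef /qcoef coefsI0.
rewrite [coefsI m.+1]coefsIE /= /solveI.
have [->|m3] := eqVneq m.+1 3%N; first by case: rhsI3 => -> ->; solve_level.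
have [->|m4] := eqVneq m.+1 4%N; first by case: rhsI4 => -> ->; solve_level.
have [->|m6] := eqVneq m.+1 6%N; first by rewrite compatI6; solve_level.
have [->|m8] := eqVneq m.+1 8%N; first by rewrite compatI8; solve_level.
by apply: cramerP; rewrite detIE detI_neq0.
Qed.

End SystemI.

Lemma laurent_familyI (C : numClosedFieldType) : six_parameter_laurent_family (@systemI C).
Proof.
apply: (@six_parameter_laurent_family_of _ _
  [:: (true, -1); (false, 2%:Z); (true, 0%:Z); (true, 2%:Z); (true, 4%:Z)]).
move=> a t1 t2 t3 t4 t5; set w := coefsI a t1 t2 t3 t4 t5.
exists (shifted 2 (pcoef w)), (shifted 4 (qcoef w)); split.
- by split=> i ?; rewrite /shifted ext0_neg //; lia.
- by rewrite /shifted /= /pcoef /w coefsI0 oner_neq0.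
- by rewrite /shifted /= /qcoef /w coefsI0 oner_neq0.
- exact/systemI_of_residuals/residualsI.
by rewrite /= /coef_at /shifted /= /pcoef /qcoef /w coefsI3 coefsI4 coefsI6
  coefsIE -[(4 + 4)%N]/8%N.
Qed.

Section SystemII.
Variables (C : numClosedFieldType) (a t1 t2 t3 t4 t5 : C).

Definition solveII m (rp rq : C) : C * C :=
  let x := m%:R in
  if m == 2%N then ((rp - 6 * t1) / 12, t1)
  else if m == 3%N then ((rp - 3 * t2) / 6, t2)
  else if m == 4%N then ((rq - 24 * t3) / 72, t3)
  else if m == 6%N then ((rp + 6 * t4) / 12, t4)
  else if m == 10%N then ((rp + 18 * t5) / 300, t5)
  else cramer (lin11 3 2 x) (lin12 x) (lin21 false 2 2 x) (lin22 false 2 x) rp rq.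

Definition stepII m (w : nat -> C * C) : C * C :=
  if m is 0 then (2, 2) else solveII m (rhsP a w 3 m) (rhsQ a w false m).

Definition coefsII := strong_rec (0, 0) stepII.

Lemma coefsIIE m : coefsII m = stepII m coefsII.
Proof.
apply: strong_recE => {}m w w' ww'; case: m ww' => //= m ww'.
by rewrite (eq_rhsP _ ww') (eq_rhsQ _ ww').
Qed.

Ltac coefII_tac :=
  rewrite coefsIIE /= /solveII /= /cramer /lin11 /lin12 /lin21 /lin22; expand_level.

Lemma coefsII0 : coefsII 0 = (2, 2).
Proof. by rewrite coefsIIE. Qed.
Lemma coefsII1 : coefsII 1 = (0, 0).
Proof. by coefII_tac; rewrite ?coefsII0 /=; congr pair; field. Qed.
Lemma rhsPII2 : rhsP a coefsII 3 2 = (-4) * a.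
Proof. by expand_level; rewrite ?coefsII0 ?coefsII1 /=; field. Qed.
Lemma compatII2 : rhsQ a coefsII false 2 = 8 * rhsP a coefsII 3 2.
Proof. by expand_level; rewrite ?coefsII0 ?coefsII1 /=; field. Qed.
Lemma coefsII2 : coefsII 2 = ((-1 / 2) * t1 + (-1 / 3) * a, t1).
Proof. by rewrite coefsIIE /= /solveII /= rhsPII2; congr pair; field. Qed.
Lemma rhsII3 : rhsP a coefsII 3 3 = 0 /\ rhsQ a coefsII false 3 = 0.
Proof.
by expand_level; rewrite ?coefsII0 ?coefsII1 ?coefsII2 /=; split; field.
Qed.
Lemma coefsII3 : coefsII 3 = ((-1 / 2) * t2, t2).
Proof. by rewrite coefsIIE /= /solveII /= rhsII3.1; congr pair; field. Qed.
Lemma rhsPII4 : rhsP a coefsII 3 4 = 0.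
Proof.
by expand_level; rewrite ?coefsII0 ?coefsII1 ?coefsII2 ?coefsII3 /=; field.
Qed.
Lemma rhsQII4 : rhsQ a coefsII false 4 = 12 * t1 ^+ 2.
Proof.
by expand_level; rewrite ?coefsII0 ?coefsII1 ?coefsII2 ?coefsII3 /=; field.
Qed.
Lemma coefsII4 : coefsII 4 = ((-1 / 3) * t3 + (1 / 6) * t1 ^+ 2, t3).
Proof. by rewrite coefsIIE /= /solveII /= rhsQII4; congr pair; field. Qed.
Lemma coefsII5 : coefsII 5 =
  ((-1 / 6) * t1 + (1 / 4) * t1 * t2, (1 / 3) * t1 + (-1 / 4) * t1 * t2 + (2 / 9) * a).
Proof.
coefII_tac; rewrite ?coefsII0 ?coefsII1 ?coefsII2 ?coefsII3 ?coefsII4 /=.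
by congr pair; field.
Qed.
Lemma rhsPII6 : rhsP a coefsII 3 6 =
  (-3 / 2) * t2 + (3 / 4) * t2 ^+ 2 + t1 * t3 + (-1 / 2) * t1 ^+ 3.
Proof.
expand_level; rewrite ?coefsII0 ?coefsII1 ?coefsII2 ?coefsII3 ?coefsII4 ?coefsII5 /=.
by field.
Qed.
Lemma compatII6 : rhsQ a coefsII false 6 = 4 * rhsP a coefsII 3 6.
Proof.
expand_level; rewrite ?coefsII0 ?coefsII1 ?coefsII2 ?coefsII3 ?coefsII4 ?coefsII5 /=.
by field.
Qed.
Lemma coefsII6 : coefsII 6 =
  ((1 / 2) * t4 + (-1 / 8) * t2 + (1 / 16) * t2 ^+ 2 + (1 / 12) * t1 * t3
     + (-1 / 24) * t1 ^+ 3, t4).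
Proof. by rewrite coefsIIE /= /solveII /= rhsPII6; congr pair; field. Qed.
Lemma coefsII7 : coefsII 7 =
  ((-1 / 72) * t3 + (1 / 16) * t2 * t3 + (119 / 2880) * t1 ^+ 2
     + (-7 / 128) * t1 ^+ 2 * t2 + (1 / 120) * a * t1,
   (1 / 12) * t3 + (1 / 8) * t2 * t3 + (17 / 480) * t1 ^+ 2
     + (-3 / 64) * t1 ^+ 2 * t2 + (7 / 180) * a * t1).
Proof.
coefII_tac.
rewrite ?coefsII0 ?coefsII1 ?coefsII2 ?coefsII3 ?coefsII4 ?coefsII5 ?coefsII6 /=.
by congr pair; field.
Qed.
Lemma coefsII8 : coefsII 8 =
  ((1 / 54) * t3 ^+ 2 + (-1 / 360) * t1 + (1 / 30) * t1 * t2
     + (-1 / 32) * t1 * t2 ^+ 2 + (-1 / 54) * t1 ^+ 2 * t3 + (1 / 216) * t1 ^+ 4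
     + (-1 / 810) * a + (1 / 180) * a * t2,
   (5 / 54) * t3 ^+ 2 + (17 / 360) * t1 + (1 / 4) * t1 * t4 + (1 / 60) * t1 * t2
     + (-3 / 32) * t1 * t2 ^+ 2 + (-11 / 216) * t1 ^+ 2 * t3 + (1 / 432) * t1 ^+ 4
     + (-4 / 405) * a + (2 / 45) * a * t2).
Proof.
coefII_tac.
rewrite ?coefsII0 ?coefsII1 ?coefsII2 ?coefsII3 ?coefsII4 ?coefsII5 ?coefsII6 ?coefsII7 /=.
by congr pair; field.
Qed.
Lemma coefsII9 : coefsII 9 =
  ((-1 / 25) * t4 + (9 / 1400) * t2 + (1 / 175) * t2 ^+ 2 + (-1 / 224) * t2 ^+ 3
     + (11 / 600) * t1 * t3 + (-3 / 112) * t1 * t2 * t3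
     + (-143 / (33 * 1000 + 600)) * t1 ^+ 3 + (9 / 896) * t1 ^+ 3 * t2
     + (4 / 945) * a * t3 + (-1 / 1080) * a * t1 ^+ 2,
   (-17 / 25) * t4 + (89 / 700) * t2 + (1 / 4) * t2 * t4 + (-53 / 2800) * t2 ^+ 2
     + (-5 / 224) * t2 ^+ 3 + (149 / 1200) * t1 * t3 + (-37 / 224) * t1 * t2 * t3
     + (943 / (67 * 1000 + 200)) * t1 ^+ 3 + (55 / 1792) * t1 ^+ 3 * t2
     + (16 / 315) * a * t3 + (-1 / 144) * a * t1 ^+ 2).
Proof.
coefII_tac; rewrite ?coefsII0 ?coefsII1 ?coefsII2 ?coefsII3 ?coefsII4 ?coefsII5.
rewrite ?coefsII6 ?coefsII7 ?coefsII8 /=.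
by congr pair; field.
Qed.
Lemma compatII10 : rhsQ a coefsII false 10 = 0.
Proof.
expand_level; rewrite ?coefsII0 ?coefsII1 ?coefsII2 ?coefsII3 ?coefsII4 ?coefsII5.
rewrite ?coefsII6 ?coefsII7 ?coefsII8 ?coefsII9 /=.
by field.
Qed.

Definition detII (x : C) := (x + 1) * (x - 2) * (x - 3) * (x - 4) * (x - 6) * (x - 10).

Lemma detIIE x :
  lin11 3 2 x * lin22 false 2 x - lin12 x * lin21 false 2 2 x = detII x.
Proof. by rewrite /lin11 /lin12 /lin21 /lin22 /detII; ring. Qed.

Lemma detII_neq0 m :
  (m != 2)%N -> (m != 3)%N -> (m != 4)%N -> (m != 6)%N -> (m != 10)%N ->
  detII m%:R != 0.
Proof.
move=> m2 m3 m4 m6 m10; rewrite /detII.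
by rewrite !mulf_neq0 // ?natr1 ?pnatr_eq0 // subr_eq0 eqr_nat.
Qed.

Lemma residualsII m : resP a coefsII 3 m = 0 /\ resQ a coefsII false m = 0.
Proof.
case: m => [|m]; first by rewrite resP_lead resQ_lead /pcoef /qcoef coefsII0 /=; split; ring.
rewrite resP_level // resQ_level // /pcoef /qcoef coefsII0.
rewrite [coefsII m.+1]coefsIIE /= /solveII.
have [->|m2] := eqVneq m.+1 2%N; first by rewrite compatII2; solve_level.
have [->|m3] := eqVneq m.+1 3%N; first by case: rhsII3 => -> ->; solve_level.
have [->|m4] := eqVneq m.+1 4%N; first by rewrite rhsPII4; solve_level.
have [->|m6] := eqVneq m.+1 6%N; first by rewrite compatII6; solve_level.
have [->|m10] := eqVneq m.+1 10%N; first by rewrite compatII10; solve_level.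
by apply: cramerP; rewrite detIIE detII_neq0.
Qed.

End SystemII.

Lemma laurent_familyII (C : numClosedFieldType) : six_parameter_laurent_family (@systemII C).
Proof.
apply: (@six_parameter_laurent_family_of _ _
  [:: (true, -2); (true, -1); (true, 0%:Z); (true, 2%:Z); (true, 6%:Z)]).
move=> a t1 t2 t3 t4 t5; set w := coefsII a t1 t2 t3 t4 t5.
exists (shifted 2 (pcoef w)), (shifted 4 (qcoef w)); split.
- by split=> i ?; rewrite /shifted ext0_neg //; lia.
- by rewrite /shifted /= /pcoef /w coefsII0 pnatr_eq0.
- by rewrite /shifted /= /qcoef /w coefsII0 pnatr_eq0.
- exact/systemII_of_residuals/residualsII.
by rewrite /= /coef_at /shifted /= /pcoef /qcoef /w coefsII2 coefsII3 coefsII4 coefsII6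
  coefsIIE -[(6 + 4)%N]/10%N.
Qed.

Theorem proposition2 (C : numClosedFieldType) :
  six_parameter_laurent_family (@systemI C) /\
  six_parameter_laurent_family (@systemII C).
Proof. by split; [exact: laurent_familyI | exact: laurent_familyII]. Qed.
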